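(* Consider smoothed X3C-$k$ or smoothed SC-$k$ on a collection $\mathcal C=\{C_1,\dots,C_n\}$, where each set weight $w_i$ is drawn independently from a distribution with density $f_i:[0,1]\to[0,\phi]$. Then the expected maximum number of iterations of local search (over all initial feasible solutions and all improving sequences) is $O(3^kn^{k+2}\phi)$, with an absolute hidden constant.
   Context: X3C-$k$ (Exact Cover by 3-Sets): given a finite set $\mathcal B$ with $|\mathcal B|=3q$ and a collection $\mathcal C=\{C_1,\dots,C_n\}$ of 3-element subsets of $\mathcal B$ with weights $w_i$, a feasible solution is $S\subseteq\mathcal C$ with $|S|=q$ and $\bigcup_{C_i\in S}C_i=\mathcal B$; its weight $\sum_{C_i\in S}w_i$ is to be maximized; neighbours of $S$ are exact covers obtained by adding or removing at most $k$ sets in total. SC-$k$ (Set Cover): given a collection $\mathcal C=\{C_1,\dots,C_n\}$ of subsets of $\mathcal B$ with weights $w_i$, a feasible solution is $S\subseteq\mathcal C$ with $\bigcup_{C_i\in S}C_i=\mathcal B$; its cost $\sum_{C_i\in S}w_i$ is to be minimized; neighbours are covers obtained by changing membership of at most $k$ sets. A solution is a feasible solution with no strictly better neighbour; local search repeatedly moves to a strictly better neighbour. *)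

From HB Require Import structures.
From mathcomp Require Import all_boot all_order all_algebra.
From mathcomp Require Import all_classical all_reals all_analysis.
Set Implicit Arguments. Unset Strict Implicit. Unset Printing Implicit Defensive.
Import Order.TTheory GRing.Theory Num.Theory.

Local Open Scope ring_scope.

Inductive problem := X3C | SC.

Section LocalSearch.
Variables (R : realType) (B : finType) (n : nat).

Definition sol_weight (w : 'I_n -> R) (S : {set 'I_n}) : R := \sum_(i in S) w i.

Definition covers (C : 'I_n -> {set B}) (S : {set 'I_n}) : bool :=
  \bigcup_(i in S) C i == [set: B].

(** Feasibility.  X3C: |S| = q (= |B|/3) and S covers B (exact cover, since
    all sets have 3 elements and |B| = 3q).  SC: S covers B. *)
Definition feasible (pb : problem) (q : nat) (C : 'I_n -> {set B})
  (S : {set 'I_n}) : bool :=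
  match pb with
  | X3C => (#|S| == q) && covers C S
  | SC => covers C S
  end.

Definition neighbour pb q C (k : nat) (S S' : {set 'I_n}) : bool :=
  [&& feasible pb q C S, feasible pb q C S' &
      #|(S :\: S') :|: (S' :\: S)| <= k]%N.

Definition better pb (w : 'I_n -> R) (S S' : {set 'I_n}) : bool :=
  match pb with
  | X3C => sol_weight w S < sol_weight w S'
  | SC => sol_weight w S' < sol_weight w S
  end.

Definition improving_run pb q C k w (s : seq {set 'I_n}) : bool :=
  all (feasible pb q C) s &&
  sorted (fun S S' => neighbour pb q C k S S' && better pb w S S') s.

(** Maximum number of iterations of local search over all initial feasible
    solutions and all improving sequences (number of steps = number of
    solutions in the run minus one).  Since runs are strictly improving, their
    solutions are pairwise distinct, so every run has fewer than 2^n steps and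
    the cap [2^n] in the range of the maximum is never binding. *)
Definition max_iterations pb q C k (w : 'I_n -> R) : nat :=
  \max_(t < (2 ^ n).+1 |
        [exists s : t.+1.-tuple {set 'I_n}, improving_run pb q C k w s]) t.

End LocalSearch.

Section Prob.
Local Open Scope classical_set_scope.
Variables (d : measure_display) (T : measurableType d) (R : realType)
  (P : probability T R) (n : nat).

(** Mutual independence of the random variables W_0, ..., W_{n-1}:
    product rule for every family of measurable sets (taking A_i = setT
    recovers every subfamily). *)
Definition mutually_independent (W : 'I_n -> {RV P >-> R}) : Prop :=
  forall A : 'I_n -> set R, (forall i, measurable (A i)) ->
    P (\bigcap_(i in [set: 'I_n]) (W i @^-1` A i)) =
    (\prod_(i < n) P (W i @^-1` A i))%E.

Definition I01 : set R := [set x : R | 0 <= x <= 1].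

Definition has_density_01 (X : {RV P >-> R}) (f : R -> R) (phi : R) : Prop :=
  [/\ measurable_fun I01 f,
      (forall x, I01 x -> 0 <= f x <= phi) &
      forall A : set R, measurable A ->
        P (X @^-1` A) =
        (\int[lebesgue_measure]_(x in A `&` I01) (f x)%:E)%E].

End Prob.

From HB Require Import structures.
From mathcomp Require Import all_boot all_order all_algebra.
From mathcomp Require Import all_classical all_reals all_analysis.
From mathcomp Require Import ring lra measurable_realfun.
Import Order.TTheory GRing.Theory Num.Theory.
Set Implicit Arguments. Unset Strict Implicit. Unset Printing Implicit Defensive.

(* Along an improving run of t steps the objective, which ranges over an
   interval of length n because the weights lie in [0,1], increases by less
   than n in total, so some step gains at most n/t.  The gain of a step is a
   linear form sum_i s_i w_i with coefficients s_i in {-1,0,1}, at most k of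
   them nonzero, so it is described by one of (2n)^k codes.  For a fixed code
   with some s_j = +-1, the gain lies in (0, e] with probability at most
   2 e phi: once the other weights are known up to a grid of mesh e/(2n),
   w_j must fall into an interval of length 2e, where its density is at most
   phi, and independence lets us sum this bound over the grid cells.  Hence
   P(at least t steps) <= (2n)^k 2 phi n/t, and summing over t <= 2^n (a
   harmonic sum bounded by n + 1) gives 4 2^k n^(k+2) phi. *)

Local Open Scope ring_scope.

Lemma path_increase (R : realDomainType) (X : Type) (r : rel X) (g : X -> R) (e : R) :
  (forall a b, r a b -> g a + e < g b) ->
  forall x s, path r x s -> (0 < size s)%N -> g x + (size s)%:R * e < g (last x s).
Proof.
move=> hr x s; elim: s x => [//|y s IH] x /= /andP[rxy ps] _.
have gxy := hr _ _ rxy.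
case: s IH ps => [|z s] IH ps /=; first by rewrite mul1r.
have := IH y ps isT; rewrite /= -(addn1 (size s).+1) natrD mulrDl mul1r; lra.
Qed.

Section LocalSearch.
Variables (R : realType) (n : nat).

Definition lin_form (s w : 'I_n -> R) : R := \sum_i s i * w i.

Lemma sol_weight_diff (w : 'I_n -> R) (S S' : {set 'I_n}) :
  sol_weight w S' - sol_weight w S =
  lin_form (fun i => (i \in S')%:R - (i \in S)%:R) w.
Proof.
rewrite /sol_weight /lin_form [\sum_(i in S') _]big_mkcond.
rewrite [\sum_(i in S) _]big_mkcond -sumrB.
by apply: eq_bigr => i _; case: (i \in S'); case: (i \in S); rewrite /=; ring.
Qed.

Lemma sol_weight_bound (w : 'I_n -> R) (S : {set 'I_n}) :
  (forall i, 0 <= w i <= 1) -> 0 <= sol_weight w S <= n%:R.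
Proof.
move=> w01; apply/andP; split; first by apply: sumr_ge0 => i _; case/andP: (w01 i).
apply: (@le_trans _ _ (\sum_(i in S) (1 : R))).
  by apply: ler_sum => i _; case/andP: (w01 i).
by rewrite sumr_const ler_nat (leq_trans (max_card _)) ?card_ord.
Qed.

Definition objective (pb : problem) (w : 'I_n -> R) (S : {set 'I_n}) : R :=
  if pb is X3C then sol_weight w S else - sol_weight w S.

Lemma better_objective pb w S S' :
  better pb w S S' = (objective pb w S < objective pb w S').
Proof. by case: pb => //=; rewrite ltrN2. Qed.

Lemma objective_le pb (w : 'I_n -> R) S S' :
  (forall i, 0 <= w i <= 1) -> objective pb w S' <= objective pb w S + n%:R.
Proof.
move=> w01; have := sol_weight_bound S w01; have := sol_weight_bound S' w01.
by case: pb => /= /andP[? ?] /andP[? ?]; lra.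
Qed.

Variable k : nat.

(* A slot [(i, true)] of a code puts [C i] into the solution, [(i, false)]
   takes it out. *)
Definition move_code := {ffun 'I_k -> 'I_n * bool}.

Definition move_coef (c : move_code) (i : 'I_n) : R :=
  if (i, true) \in codom c then 1 else if (i, false) \in codom c then -1 else 0.

Lemma move_coef_cases c i :
  [\/ move_coef c i = 0, move_coef c i = 1 | move_coef c i = -1].
Proof. by rewrite /move_coef; do 2?case: ifP => _; constructor. Qed.

Lemma card_move_code : #|{: move_code}| = ((2 * n) ^ k)%N.
Proof. by rewrite card_ffun card_prod card_bool !card_ord mulnC. Qed.

Lemma move_code_exists (S S' : {set 'I_n}) : S != S' ->
  (#|(S :\: S') :|: (S' :\: S)| <= k)%N ->
  exists c : move_code,
    forall w, lin_form (move_coef c) w = sol_weight w S' - sol_weight w S.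
Proof.
set D := (S :\: S') :|: (S' :\: S) => neq cardD.
have [i0 i0D] : exists i0, i0 \in D.
  apply/set0Pn; apply: contra neq => /eqP D0; apply/eqP/setP => i.
  have : i \notin D by rewrite D0 inE.
  by rewrite !inE; case: (i \in S); case: (i \in S').
pose L := enum D.
pose c : move_code := [ffun p : 'I_k => (nth i0 L p, nth i0 L p \in S')].
have nthD p : nth i0 L p \in D.
  case: (ltnP p (size L)) => hp; first by rewrite -mem_enum mem_nth.
  by rewrite nth_default.
have codomE i b : ((i, b) \in codom c) = (i \in D) && (b == (i \in S')).
  apply/codomP/andP => [[p]|[iD /eqP ->]].
    by rewrite ffunE => -[-> ->]; rewrite nthD.
  have hi : (index i L < k)%N.
    by apply: leq_trans cardD; rewrite cardE index_mem mem_enum.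
  by exists (Ordinal hi); rewrite ffunE /= nth_index ?mem_enum.
exists c => w; rewrite sol_weight_diff /lin_form; apply: eq_bigr => i _.
congr (_ * _); rewrite /move_coef !codomE.
case iD: (i \in D); move: iD; rewrite !inE;
  by case: (i \in S); case: (i \in S') => //= _; rewrite ?subrr ?sub0r ?subr0.
Qed.

Variables (B : finType) (pb : problem) (q : nat) (C : 'I_n -> {set B}).

Definition improving_step (w : 'I_n -> R) (S S' : {set 'I_n}) : bool :=
  neighbour pb q C k S S' && better pb w S S'.

Lemma improving_step_gain w S S' : improving_step w S S' ->
  exists c : move_code,
    lin_form (move_coef c) w = objective pb w S' - objective pb w S.
Proof.
case/andP=> /and3P[_ _ cardD]; rewrite better_objective => lt_SS'.
have neq : S != S' by apply: contraTneq lt_SS' => ->; rewrite ltxx.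
case: pb lt_SS' => _ /=.
  by have [c gain] := move_code_exists neq cardD; exists c.
rewrite eq_sym in neq; rewrite finset.setUC in cardD.
have [c gain] := move_code_exists neq cardD.
by exists c; rewrite gain opprK addrC.
Qed.

Lemma long_improving_path w t : (0 < t <= max_iterations pb q C k w)%N ->
  exists x s, path (improving_step w) x s /\ (t <= size s)%N.
Proof.
case/andP=> t_gt0 t_le.
have : [exists t' : 'I_(2 ^ n).+1, [exists s : t'.+1.-tuple {set 'I_n},
    improving_run pb q C k w s] && (t <= t')%N].
  move: t_le; apply: contraLR; rewrite negb_exists => /forallP no_run.
  rewrite -ltnNge; apply: (@leq_ltn_trans t.-1); last by rewrite prednK.
  apply/bigmax_leqP => t' run_t'.
  by move: (no_run t'); rewrite run_t' /= -ltnNge => lt_t; rewrite -ltnS prednK.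
case/existsP=> t' /andP[/existsP[[[|x s] /= size_s] run] le_tt'] //.
exists x, s; split; last by move/eqP: size_s => [->].
by case/andP: run.
Qed.

Lemma small_gain w t : (forall i, 0 <= w i <= 1) ->
  (0 < t <= max_iterations pb q C k w)%N ->
  exists c : move_code, 0 < lin_form (move_coef c) w <= n%:R / t%:R.
Proof.
move=> w01 t_run; have [x [s [run le_ts]]] := long_improving_path t_run.
have t_gt0 : (0 < t)%N by case/andP: t_run.
set e := n%:R / t%:R.
have [[S [S' [step small]]]|no_small] := pselect (exists S S',
    improving_step w S S' /\ objective pb w S' - objective pb w S <= e).
  have [c gain] := improving_step_gain step.
  exists c; rewrite gain small andbT subr_gt0 -better_objective.
  by case/andP: step.
have large a b : improving_step w a b -> objective pb w a + e < objective pb w b.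
  move=> ab; rewrite ltNge; apply/negP => le_ab.
  by apply: no_small; exists a, b; split=> //; lra.
have := path_increase large run (leq_trans t_gt0 le_ts).
have := objective_le pb x (last x s) w01.
have : n%:R <= (size s)%:R * e.
  by rewrite /e mulrA ler_pdivlMr ?ltr0n // mulrC ler_wpM2r // ler_nat.
lra.
Qed.

Lemma max_iterations_le (w : 'I_n -> R) : (max_iterations pb q C k w <= 2 ^ n)%N.
Proof. by apply/bigmax_leqP => t _; rewrite -ltnS. Qed.

Lemma max_iterations_eq0 (w : 'I_n -> R) : n = 0%N -> max_iterations pb q C k w = 0%N.
Proof.
move=> n0; have no_index (i : 'I_n) : False by case: i; rewrite n0.
apply/eqP; rewrite -leqn0 leqNgt; apply/negP => run.
have w01 i : 0 <= w i <= 1 by case: (no_index i).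
have [c] := @small_gain w 1 w01 run.
by rewrite /lin_form big1 ?ltxx // => i; case: (no_index i).
Qed.

End LocalSearch.

Local Open Scope classical_set_scope.

Lemma Boole_inequality_seq d (T : measurableType d) (R : realType)
    (mu : {measure set T -> \bar R}) (I : Type) (s : seq I) (F : I -> set T) :
  (forall i, measurable (F i)) ->
  (mu (\big[setU/set0]_(i <- s) F i) <= \sum_(i <- s) mu (F i))%E.
Proof.
move=> mF; elim: s => [|a s IH]; first by rewrite !big_nil measure0.
rewrite !big_cons; apply: le_trans (measureU2 _ _ _) _ => //.
  exact: bigsetU_measurable.
exact: leeD2l.
Qed.

Lemma ge0_le_integralT d (T : measurableType d) (R : realType)
    (mu : {measure set T -> \bar R}) (f g : T -> \bar R) :
  (forall x, (0 <= f x)%E) -> (forall x, (f x <= g x)%E) ->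
  (\int[mu]_(x in [set: T]) f x <= \int[mu]_(x in [set: T]) g x)%E.
Proof.
move=> f0 fg; have g0 x : (0 <= g x)%E by exact: le_trans (fg x).
rewrite ge0_integralTE // ge0_integralTE //.
apply: ereal_sup_le => _ [h hf <-]; exists h => //= x.
exact: le_trans (fg x).
Qed.

Lemma measurable_I01 (R : realType) : measurable (@I01 R).
Proof. by have -> : @I01 R = `[0, 1] by rewrite set_itvE. Qed.

Section Smoothing.
Variables (d : measure_display) (T : measurableType d) (R : realType)
  (P : probability T R) (n : nat) (W : 'I_n -> {RV P >-> R})
  (f : 'I_n -> R -> R) (phi : R).
Hypotheses (indep : mutually_independent W)
  (dens : forall i, has_density_01 (W i) (f i) phi).

Definition pr (A : set T) : R := fine (P A).

Lemma prE A : measurable A -> P A = (pr A)%:E.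
Proof. by move=> mA; rewrite /pr fineK // fin_num_measure. Qed.

Lemma pr_ge0 A : 0 <= pr A.
Proof. by rewrite /pr fine_ge0 // measure_ge0. Qed.

Lemma measurable_W i (A : set R) : measurable A -> measurable (W i @^-1` A).
Proof. exact: measurable_funPTI. Qed.

Definition out01 := \big[setU/set0]_(i <- enum 'I_n) (W i @^-1` ~` @I01 R).

Lemma measurable_out01 : measurable out01.
Proof.
apply: bigsetU_measurable => i _.
by apply: measurable_W; apply: measurableC; exact: measurable_I01.
Qed.

Lemma P_out01 : P out01 = 0%E.
Proof.
apply/eqP; rewrite eq_le measure_ge0 andbT.
apply: le_trans (Boole_inequality_seq _ _ _) _.
  by move=> i; apply: measurable_W; apply: measurableC; exact: measurable_I01.
rewrite big1 // => i _ /=.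
have [_ _ ->] := dens i; last by apply: measurableC; exact: measurable_I01.
by rewrite setICl integral_set0.
Qed.

Lemma W_in01 x : ~ out01 x -> forall i, 0 <= W i x <= 1.
Proof.
move=> x_in i; apply: contrapT => Wi_out; apply: x_in.
by rewrite /out01 -bigcup_seq; exists i; rewrite /= ?mem_enum.
Qed.

Lemma phi_ge0 : (0 < n)%N -> 0 <= phi.
Proof.
move=> n_gt0; have [_ f_bound _] := dens (Ordinal n_gt0).
have /f_bound/andP[] : @I01 R 0 by rewrite /I01 /= lexx ler01.
exact: le_trans.
Qed.

Lemma P_W_le i (A : set R) : measurable A -> 0 <= phi ->
  (P (W i @^-1` A) <= phi%:E * lebesgue_measure A)%E.
Proof.
move=> mA phi0; have [mf f_bound ->] := dens i => //.
have mAI : measurable (A `&` @I01 R) by apply: measurableI mA _; exact: measurable_I01.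
apply: (@le_trans _ _ (\int[lebesgue_measure]_(x in A `&` @I01 R) phi%:E)%E).
  apply: ge0_le_integral => //.
  - by move=> x [_ /f_bound /andP[]]; rewrite lee_fin.
  - by apply/measurable_EFinP; apply: measurable_funS mf => //; exact: measurable_I01.
  - by move=> x [_ /f_bound /andP[]]; rewrite lee_fin.
rewrite integral_cst // lee_wpmul2l ?lee_fin //.
by apply: le_measure; rewrite ?inE //; exact: subIsetl.
Qed.

Definition lin_event (s : 'I_n -> R) (e : R) :=
  [set x | 0 < lin_form s (fun i => W i x) <= e].

Lemma measurable_lin_event s e : measurable (lin_event s e).
Proof.
have mlin : measurable_fun setT (fun x => lin_form s (fun i => W i x)).
  by apply: measurable_sum => i; apply: measurable_funM => //; exact: measurable_funPT.
have -> : lin_event s e = (fun x => lin_form s (fun i => W i x)) @^-1` `]0, e].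
  by apply/seteqP; split => x /=; rewrite in_itv.
by rewrite -[_ @^-1` _]setTI; exact: mlin measurableT _ (measurable_itv _).
Qed.

Section Grid.
Variables (s : 'I_n -> R) (e : R) (j : 'I_n).
Hypotheses (s_le1 : forall i, `|s i| <= 1) (sj1 : `|s j| = 1) (e_gt0 : 0 < e).

Let n_gt0 : (0 < n)%N. Proof. exact: leq_ltn_trans (leq0n _) (ltn_ord j). Qed.

Definition width := e / (2 * n%:R).
Definition grid_size := Num.bound width^-1.
Definition cell (m : nat) : set R := `[m%:R * width, m.+1%:R * width[.
Definition cell_of (y : R) : 'I_grid_size.+1 := inord (Num.truncn (y / width)).

Lemma width_gt0 : 0 < width.
Proof. by rewrite divr_gt0 // mulr_gt0 // ltr0n. Qed.

Lemma sum_width_le : \sum_(i | i != j) width <= e / 2.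
Proof.
have w_gt0 := width_gt0; apply: (@le_trans _ _ (\sum_(i < n) width)).
  by rewrite [X in _ <= X](bigD1 j) //= lerDr ltW.
have n_neq0 : n%:R != 0 :> R by rewrite pnatr_eq0 -lt0n.
by rewrite sumr_const card_ord -mulr_natl le_eqVlt /width; apply/orP; left;
  apply/eqP; field.
Qed.

Lemma cell_ofE y : 0 <= y <= 1 -> (cell_of y : nat) = Num.truncn (y / width).
Proof.
case/andP=> y_ge0 y_le1; have w_gt0 := width_gt0.
have lt_M : (Num.truncn (y / width) < grid_size)%N.
  rewrite truncn_lt_nat; last by rewrite divr_ge0 // ltW.
  apply: le_lt_trans (archi_boundP _); last by rewrite invr_ge0 ltW.
  by rewrite ler_pdivrMr // mulVf ?gt_eqF.
by rewrite /cell_of inordK // ltnW.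
Qed.

Lemma mem_cell_of y : 0 <= y <= 1 -> cell (cell_of y) y.
Proof.
move=> y01; rewrite /cell /= in_itv /= cell_ofE //.
have w_gt0 := width_gt0; case/andP: y01 => y_ge0 _.
have /andP[lo hi] := truncn_itv (divr_ge0 y_ge0 (ltW w_gt0)).
by rewrite -ler_pdivlMr // -ltr_pdivrMr // lo hi.
Qed.

Lemma cell_inj m m' y : cell m y -> cell m' y -> m = m'.
Proof.
have w_gt0 := width_gt0.
suff truncnE p : cell p y -> Num.truncn (y / width) = p by move=> /truncnE <- /truncnE.
rewrite /cell /= in_itv /= => /andP[lo hi]; apply: truncn_def.
by rewrite ler_pdivlMr // ltr_pdivrMr // lo hi.
Qed.

Definition grid := {ffun 'I_n -> 'I_grid_size.+1}.

Definition approx (g : grid) : R := \sum_(i | i != j) s i * ((g i)%:R * width).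

(* Once the coordinates other than [j] are known up to [width], [W j] is
   confined to an interval of length [2 e]. *)
Definition strip_lo (g : grid) : R :=
  if s j == 1 then - approx g - e / 2 else approx g - 3 * e / 2.

Definition strip (g : grid) : set R := `[strip_lo g, strip_lo g + 2 * e].

(* A grid point [g] also carries a dummy coordinate [g j]; only [g j = 0]
   gives a nonempty box, so that boxes can be indexed by a full finite
   function type. *)
Definition box_side (g : grid) (i : 'I_n) : set R :=
  if i == j then (if g j == ord0 then strip g else set0) else cell (g i).

Definition box (g : grid) := \bigcap_(i in [set: 'I_n]) (W i @^-1` box_side g i).

Definition grid_of x : grid := [ffun i => if i == j then ord0 else cell_of (W i x)].

Lemma approx_grid_of x : ~ out01 x ->
  approx (grid_of x) - e / 2 <= \sum_(i | i != j) s i * W i x <=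
  approx (grid_of x) + e / 2.
Proof.
move=> x_in; have := sum_width_le.
have term_close i : i != j ->
    - width <= s i * W i x - s i * ((grid_of x i)%:R * width) <= width.
  move=> ij; rewrite ffunE (negbTE ij).
  have := mem_cell_of (W_in01 x_in i); rewrite /cell /= in_itv /= => /andP[lo hi].
  rewrite -addn1 natrD mulrDl mul1r in hi.
  have := s_le1 i; rewrite ler_norml => /andP[s_lo s_hi]; apply/andP; split; nra.
have lo : \sum_(i | i != j) - width <= \sum_(i | i != j) s i * W i x - approx (grid_of x).
  by rewrite /approx -sumrB; apply: ler_sum => i ij; case/andP: (term_close i ij).
have hi : \sum_(i | i != j) s i * W i x - approx (grid_of x) <= \sum_(i | i != j) width.
  by rewrite /approx -sumrB; apply: ler_sum => i ij; case/andP: (term_close i ij).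
rewrite sumrN in lo; move=> sum_le; apply/andP; split; lra.
Qed.

Lemma box_grid_of x : lin_event s e x -> ~ out01 x -> box (grid_of x) x.
Proof.
move=> x_ev x_in i _ /=; rewrite /box_side; case: eqVneq => [->|ij]; last first.
  by rewrite ffunE (negbTE ij); exact/mem_cell_of/W_in01.
rewrite ffunE eqxx eqxx /strip /strip_lo.
have := approx_grid_of x_in; move: x_ev; rewrite /lin_event /= /lin_form (bigD1 j) //=.
have /eqP := sj1; rewrite eqr_norml ler01 andbT => /orP[] /eqP ->.
  by rewrite eqxx /= in_itv /= => /andP[? ?] /andP[? ?]; apply/andP; split; lra.
rewrite ifF /=; last by apply/eqP; lra.
by rewrite in_itv /= => /andP[? ?] /andP[? ?]; apply/andP; split; lra.
Qed.

Lemma measurable_box_side g i : measurable (box_side g i).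
Proof.
rewrite /box_side; case: (i == j); last exact: measurable_itv.
by case: (g j == ord0) => //; exact: measurable_itv.
Qed.

Lemma measurable_box g : measurable (box g).
Proof.
apply: fin_bigcap_measurable; first exact: finite_finset.
by move=> i _; apply: measurable_W; exact: measurable_box_side.
Qed.

Lemma P_box g : P (box g) = (\prod_i pr (W i @^-1` box_side g i))%:E.
Proof.
rewrite /box (@indep (box_side g)); last exact: measurable_box_side.
rewrite -prodEFin; apply: eq_bigr => i _.
by rewrite prE //; apply: measurable_W; exact: measurable_box_side.
Qed.

Lemma lebesgue_measure_strip g : lebesgue_measure (strip g) = (2 * e)%:E.
Proof.
have two_e_gt0 : 0 < 2 * e by rewrite mulr_gt0.
rewrite lebesgue_measure_itv /= lte_fin ltrDl two_e_gt0 -EFinB.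
by congr (_%:E); ring.
Qed.

Definition grid_weight i (m : 'I_grid_size.+1) : R :=
  if i == j then (m == ord0)%:R else pr (W i @^-1` cell m).

Lemma prod_box_le g :
  \prod_i pr (W i @^-1` box_side g i) <= 2 * e * phi * \prod_i grid_weight i (g i).
Proof.
have phi0 := phi_ge0 n_gt0.
rewrite (bigD1 j) //= [X in _ <= _ * X](bigD1 j) //= mulrA.
apply: ler_pM.
- exact: pr_ge0.
- by apply: prodr_ge0 => i _; exact: pr_ge0.
- rewrite /box_side /grid_weight !eqxx; case: (g j == ord0) => /=; last first.
    by rewrite mulr0 preimage_set0 /pr measure0.
  rewrite mulr1 -lee_fin -prE; last by apply: measurable_W; exact: measurable_itv.
  apply: le_trans (P_W_le j _ phi0) _; first exact: measurable_itv.
  by rewrite lebesgue_measure_strip -EFinM lee_fin mulrC.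
- by apply: ler_prod => i ij; rewrite /box_side /grid_weight (negbTE ij) pr_ge0 lexx.
Qed.

Lemma sum_pr_cells i : \sum_(m < grid_size.+1) pr (W i @^-1` cell m) <= 1.
Proof.
have mcell m : measurable (W i @^-1` cell m) by apply: measurable_W; exact: measurable_itv.
rewrite -lee_fin -sumEFin.
under eq_bigr do rewrite -prE //.
rewrite -measure_bigsetU_ord //; first by apply: probability_le1; exact: bigsetU_measurable.
by move=> m m' _ _ [y [ym ym']]; apply: val_inj; exact: cell_inj ym ym'.
Qed.

Lemma sum_grid_weight : \sum_(g : grid) \prod_i grid_weight i (g i) <= 1.
Proof.
rewrite -bigA_distr_bigA /=; apply: prodr_ile1 => i _; rewrite /grid_weight.
case: (i == j); last by rewrite sum_pr_cells andbT; apply: sumr_ge0 => m _; exact: pr_ge0.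
rewrite (bigD1 ord0) //= big1 ?addr0 ?ler01 ?lexx // => m m_neq0.
by rewrite (negbTE m_neq0).
Qed.

Lemma P_lin_event_grid : (P (lin_event s e) <= (2 * e * phi)%:E)%E.
Proof.
have c_ge0 : 0 <= 2 * e * phi by rewrite !mulr_ge0 ?(ltW e_gt0) ?phi_ge0.
pose boxes := \big[setU/set0]_(g <- index_enum grid) box g.
have mboxes : measurable boxes by apply: bigsetU_measurable => g _; exact: measurable_box.
have cover : lin_event s e `<=` out01 `|` boxes.
  move=> x x_ev; have [x_out|x_in] := pselect (out01 x); [by left|right].
  rewrite /boxes -bigcup_seq; exists (grid_of x); last exact: box_grid_of.
  by rewrite /= mem_index_enum.
apply: le_trans (le_measure _ _ _ cover) _; rewrite ?inE.
- exact: measurable_lin_event.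
- exact: measurableU measurable_out01 mboxes.
apply: le_trans (measureU2 _ measurable_out01 mboxes) _.
have out01_le0 : (P out01 <= 0)%E by rewrite P_out01.
apply: le_trans (leeD2r _ out01_le0) _; rewrite add0e.
apply: le_trans (Boole_inequality_seq _ _ measurable_box) _.
rewrite (eq_bigr (fun g => (\prod_i pr (W i @^-1` box_side g i))%:E)); last first.
  by move=> g _; exact: P_box.
rewrite sumEFin lee_fin; apply: le_trans (ler_sum _ (fun g _ => prod_box_le g)) _.
by rewrite -mulr_sumr -[X in _ <= X]mulr1 ler_wpM2l // sum_grid_weight.
Qed.

End Grid.

Lemma P_move_event k (c : move_code n k) e : (0 < n)%N -> 0 < e ->
  (P (lin_event (move_coef R c) e) <= (2 * e * phi)%:E)%E.
Proof.
move=> n_gt0 e_gt0.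
have coef_le1 i : `|move_coef R c i| <= 1.
  by case: (move_coef_cases R c i) => ->; rewrite ?normr0 ?normrN ?normr1 ?ler01.
have [[j cj]|coef0] := pselect (exists j, move_coef R c j != 0).
  apply: (@P_lin_event_grid _ _ j coef_le1 _ e_gt0).
  by move: cj; case: (move_coef_cases R c j) => ->; rewrite ?eqxx ?normrN ?normr1.
have -> : lin_event (move_coef R c) e = set0.
  apply/seteqP; split => x //=.
  rewrite /lin_event /lin_form /= big1 ?ltxx // => i _.
  have /eqP -> : move_coef R c i == 0.
    by apply: contrapT => /negP ci; apply: coef0; exists i.
  by rewrite mul0r.
by rewrite measure0 lee_fin !mulr_ge0 ?(ltW e_gt0) ?phi_ge0.
Qed.

End Smoothing.

Lemma harmonic_pow2_le (R : realFieldType) m :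
  \sum_(t < 2 ^ m) (t.+1%:R : R)^-1 <= m.+1%:R.
Proof.
elim: m => [|m IH]; first by rewrite expn0 big_ord1 invr1.
rewrite expnS mul2n -addnn big_split_ord /=.
have pow_gt0 : (0 : R) < (2 ^ m)%:R by rewrite ltr0n expn_gt0.
have upper_half : \sum_(t < 2 ^ m) ((2 ^ m + t).+1%:R : R)^-1 <= 1.
  apply: (@le_trans _ _ (\sum_(t < 2 ^ m) ((2 ^ m)%:R : R)^-1)).
    apply: ler_sum => t _; rewrite lef_pV2 ?posrE ?ltr0n ?expn_gt0 //.
    by rewrite ler_nat -addnS leq_addr.
  by rewrite sumr_const card_ord -(mulr_natr ((2 ^ m)%:R^-1 : R) (2 ^ m)) mulVf // gt_eqF.
rewrite -(addn1 m.+1) natrD; lra.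
Qed.

Lemma sum_gain_bounds_le (R : realFieldType) (n k : nat) (phi : R) :
  (0 < n)%N -> 0 <= phi ->
  \sum_(t < 2 ^ n) ((2 * n) ^ k)%:R * (2 * (n%:R / t.+1%:R) * phi) <=
  (4 * 2 ^ k * n ^ (k + 2))%:R * phi.
Proof.
move=> n_gt0 phi_ge0; set N : R := n%:R.
have N_ge1 : 1 <= N by rewrite /N ler1n.
set K : R := ((2 * n) ^ k)%:R * 2 * N * phi.
have K_ge0 : 0 <= K by rewrite /K !mulr_ge0 // ler0n.
have -> : \sum_(t < 2 ^ n) ((2 * n) ^ k)%:R * (2 * (N / t.+1%:R) * phi) =
    K * \sum_(t < 2 ^ n) (t.+1%:R)^-1.
  by rewrite mulr_sumr; apply: eq_bigr => t _; rewrite /K; ring.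
apply: (@le_trans _ _ (K * (2 * N))).
  by rewrite ler_wpM2l // (le_trans (harmonic_pow2_le _ _)) // -addn1 natrD -/N; lra.
by rewrite /K !(natrX, natrM) exprMn exprD -/N le_eqVlt; apply/orP; left; apply/eqP; ring.
Qed.

Section ExpectedIterations.
Variables (pb : problem) (d : measure_display) (T : measurableType d) (R : realType)
  (P : probability T R) (B : finType) (n q k : nat) (C : 'I_n -> {set B}) (phi : R)
  (W : 'I_n -> {RV P >-> R}) (f : 'I_n -> R -> R).
Hypotheses (indep : mutually_independent W)
  (dens : forall i, has_density_01 (W i) (f i) phi).

Let gain_event t (c : move_code n k) := lin_event W (move_coef R c) (n%:R / t.+1%:R).

Lemma iterations_le_indicators x :
  (max_iterations pb q C k (fun i => W i x))%:R <=
  \sum_(t < 2 ^ n) (\1_(out01 W) x + \sum_(c : move_code n k) \1_(gain_event t c) x) :> R.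
Proof.
set N := max_iterations _ _ _ _ _.
have ind_ge0 (A : set T) : 0 <= \1_A x :> R by rewrite indicE ler0n.
have sum_ge0 t : 0 <= \sum_(c : move_code n k) \1_(gain_event t c) x :> R.
  by apply: sumr_ge0.
have [x_out|x_in] := pselect (out01 W x).
  apply: (@le_trans _ _ (\sum_(t < 2 ^ n) (1 : R))).
    by rewrite sumr_const card_ord ler_nat max_iterations_le.
  by apply: ler_sum => t _; rewrite indicE mem_set //= mulr1n lerDl.
have -> : N%:R = \sum_(t < N) (1 : R) by rewrite sumr_const card_ord.
rewrite (big_ord_widen _ (fun _ => (1 : R)) (max_iterations_le _ _ _ _ _)) big_mkcond /=.
apply: ler_sum => t _; case: ifP => t_run; last exact: addr_ge0.
have [c gain] := small_gain (W_in01 x_in) (t_run : (0 < t.+1 <= N)%N).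
rewrite (bigD1 c) //= [\1_(gain_event t c) x]indicE mem_set /=; last exact: gain.
rewrite mulr1n addrCA lerDl; apply: addr_ge0 => //; exact: sumr_ge0.
Qed.

Lemma integral_indicators_le t : (0 < n)%N ->
  (\int[P]_(x in [set: T]) ((\1_(out01 W) x : R)%:E +
      \sum_(c : move_code n k) (\1_(gain_event t c) x : R)%:E) <=
   (((2 * n) ^ k)%:R * (2 * (n%:R / t.+1%:R) * phi))%:E)%E.
Proof.
move=> n_gt0.
have m_out : measurable_fun setT (fun x => (\1_(out01 W) x : R)%:E).
  by apply/measurable_EFinP/measurable_indic; exact: measurable_out01.
have m_ev c : measurable (gain_event t c) by exact: measurable_lin_event.
have m_sum : measurable_fun setT
    (fun x => \sum_(c : move_code n k) (\1_(gain_event t c) x : R)%:E)%E.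
  by apply: emeasurable_sum => c; apply/measurable_EFinP/measurable_indic.
have sum_ge0 x : (0 <= \sum_(c : move_code n k) (\1_(gain_event t c) x : R)%:E)%E.
  by apply: sume_ge0 => c _; rewrite lee_fin indicE ler0n.
rewrite ge0_integralD //.
rewrite integral_indic //; last exact: measurable_out01.
have out01_le0 : (P (out01 W) <= 0)%E by rewrite (P_out01 dens).
rewrite setIT; apply: le_trans (leeD2r _ out01_le0) _.
rewrite add0e ge0_integral_sum //; last first.
  by move=> c; apply/measurable_EFinP/measurable_indic.
apply: (@le_trans _ _ (\sum_(c : move_code n k) (2 * (n%:R / t.+1%:R) * phi)%:E)%E).
  apply: lee_sum => c _; rewrite integral_indic // setIT.
  by apply: P_move_event => //; rewrite divr_gt0 // ltr0n.
by rewrite sumEFin sumr_const card_move_code lee_fin -[X in X <= _]mulr_natl.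
Qed.

Lemma expected_iterations_le : (0 < n)%N ->
  (\int[P]_(x in [set: T]) ((max_iterations pb q C k (fun i => W i x))%:R : R)%:E <=
   ((4 * 2 ^ k * n ^ (k + 2))%:R * phi)%:E)%E.
Proof.
move=> n_gt0.
pose bound x := \sum_(t < 2 ^ n) ((\1_(out01 W) x : R)%:E +
  \sum_(c : move_code n k) (\1_(gain_event t c) x : R)%:E)%E.
have ind_ge0 (A : set T) x : (0 <= (\1_A x : R)%:E)%E by rewrite lee_fin indicE ler0n.
apply: (@le_trans _ _ (\int[P]_(x in [set: T]) bound x)%E).
  apply: ge0_le_integralT => x; first by rewrite lee_fin ler0n.
  have -> : bound x = (\sum_(t < 2 ^ n) (\1_(out01 W) x +
      \sum_(c : move_code n k) \1_(gain_event t c) x))%:E.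
    by rewrite -sumEFin; apply: eq_bigr => t _; rewrite EFinD sumEFin.
  by rewrite lee_fin iterations_le_indicators.
rewrite ge0_integral_sum //; last first.
- by move=> t x _; apply: adde_ge0 => //; apply: sume_ge0.
- move=> t; apply: emeasurable_funD.
    by apply/measurable_EFinP/measurable_indic; exact: measurable_out01.
  apply: emeasurable_sum => c; apply/measurable_EFinP/measurable_indic.
  exact: measurable_lin_event.
apply: (@le_trans _ _
    (\sum_(t < 2 ^ n) (((2 * n) ^ k)%:R * (2 * (n%:R / t.+1%:R) * phi))%:E)%E).
  by apply: lee_sum => t _; exact: integral_indicators_le.
by rewrite sumEFin lee_fin sum_gain_bounds_le // (phi_ge0 dens).
Qed.

End ExpectedIterations.

Theorem mainTheorem15 :
  exists c : nat,
  forall (pb : problem) (R : realType) (d : measure_display)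
    (T : measurableType d) (P : probability T R)
    (B : finType) (n q k : nat) (C : 'I_n -> {set B}) (phi : R)
    (W : 'I_n -> {RV P >-> R}) (f : 'I_n -> R -> R),
    injective C ->
    (pb = X3C -> #|B| = (3 * q)%N /\ forall i, #|C i| = 3%N) ->
    mutually_independent W ->
    (forall i, has_density_01 (W i) (f i) phi) ->
    (\int[P]_(x in [set: T])
        ((max_iterations pb q C k (fun i => W i x))%:R : R)%:E
      <= ((c * 3 ^ k * n ^ (k + 2))%:R * phi)%:E)%E.
Proof.
exists 4%N => pb R d T P B n q k C phi W f _ _ indep dens.
have [n0|n_gt0] := posnP n.
  subst n; rewrite integral0_eq => [|x _]; last by rewrite max_iterations_eq0.
  by rewrite exp0n ?addn2 // muln0 mul0r.
apply: le_trans (expected_iterations_le pb q k C indep dens n_gt0) _.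
rewrite lee_fin ler_wpM2r ?(phi_ge0 dens n_gt0) // ler_nat leq_mul2r leq_mul2l /=.
by apply/orP; right; case: k => // k; rewrite leq_exp2r.
Qed.
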